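(* Let $N\ge1$, let $f:\{0,1\}^N\to\{-1,1\}$, and suppose a quantum query algorithm computes $f$ with error probability at most $\epsilon$ using $T$ queries. Then for every positive odd integer $k$, $$T\;\ge\;\frac12\left[1-\sqrt[k]{\frac{1+2\sqrt{\epsilon}}{2}+\frac{1-2\sqrt{\epsilon}}{2}\sum_{s\in\{0,1\}^N}\hat f_s^{\,2}\,(1-2\lambda_s)^k}\right]N .$$
   Context: Quantum query model: the input $x=(x_0,\dots,x_{N-1})\in\{0,1\}^N$ is accessible only through an oracle. The algorithm works in a Hilbert space with basis states $|i\rangle_I|a\rangle_A|w\rangle_W|r\rangle_R$ (index register $i\in\{0,\dots,N-1\}$, one-bit answer register $a$, a working register $w$ of fixed size, and a one-bit result register $r$). An algorithm with $T$ queries is a sequence $U_0, O_x, U_1, O_x,\dots,O_x,U_T$ of unitaries, where the $U_j$ are arbitrary unitaries independent of $x$ and the query gate is $O_x:|i\rangle|a\rangle|w\rangle|r\rangle\mapsto|i\rangle|a\oplus x_i\rangle|w\rangle|r\rangle$. It starts from a fixed basis state, and at the end the result register is measured. It computes $f$ with error probability at most $\epsilon$ if for every $x$ the measured result equals $f(x)$ with probability at least $1-\epsilon$. Fourier coefficients: $\hat f_s=E_x\big[f(x)(-1)^{s\cdot x}\big]$ for $s\in\{0,1\}^N$, $x$ uniform in $\{0,1\}^N$, $s\cdot x=\sum_i s_ix_i$. For $s\in\{0,1\}^N$, $|s|$ is the number of ones in $s$ and $\lambda_s=|s|/N$. The $k$-th root is the real $k$-th root. *)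

From HB Require Import structures.
From mathcomp Require Import all_boot all_order all_algebra.
From mathcomp Require Import complex.
From mathcomp Require Import reals exp.
Unset Printing Implicit Defensive.
Import Order.TTheory GRing.Theory Num.Theory.
Local Open Scope ring_scope.

Section Quantum.
Variable R : realType.
Local Notation C := R[i].

(* Inputs x in {0,1}^N, bits represented by bool (true = 1). *)
Definition input (N : nat) := {ffun 'I_N -> bool}.

(* Basis states |i>_I |a>_A |w>_W |r>_R ; the working register has m states. *)
Definition basis (N m : nat) : finType := ('I_N * bool * 'I_m * bool)%type.

Definition bidx {N m} (b : basis N m) : 'I_N := b.1.1.1.
Definition bans {N m} (b : basis N m) : bool := b.1.1.2.
Definition bwork {N m} (b : basis N m) : 'I_m := b.1.2.
Definition bres {N m} (b : basis N m) : bool := b.2.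

Definition op (B : finType) := B -> B -> C.

Definition unitary {B : finType} (U : op B) : Prop :=
  forall i j : B, \sum_(k : B) (U k i)^* * U k j = (i == j)%:R.

Definition apply {B : finType} (U : op B) (psi : B -> C) : B -> C :=
  fun i => \sum_(j : B) U i j * psi j.

Definition oracle_map {N m} (x : input N) (b : basis N m) : basis N m :=
  (bidx b, xorb (bans b) (x (bidx b)), bwork b, bres b).

Definition oracle {N m} (x : input N) : op (basis N m) :=
  fun b b' => (b == oracle_map x b')%:R.

Definition ket {B : finType} (b0 : B) : B -> C := fun b => (b == b0)%:R.

Record algorithm (N T : nat) := Algorithm {
  wsize : nat;
  gates : 'I_T.+1 -> op (basis N wsize);
  gates_unitary : forall j, unitary (gates j);
  start : basis N wsize
}.
Arguments wsize {N T}.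
Arguments gates {N T}.
Arguments start {N T}.

Fixpoint state_upto {N T} (A : algorithm N T) (x : input N) (t : nat)
  : basis N (wsize A) -> C :=
  match t with
  | 0 => apply (gates A (inord 0)) (ket (start A))
  | t'.+1 => apply (gates A (inord t'.+1))
               (apply (oracle x) (@state_upto N T A x t'))
  end.

Definition final_state {N T} (A : algorithm N T) (x : input N) :=
  state_upto A x T.

Definition sqnorm (z : C) : R := complex.Re z ^+ 2 + complex.Im z ^+ 2.

Definition prob_result {N T} (A : algorithm N T) (x : input N) (r : bool) : R :=
  \sum_(b : basis N (wsize A) | bres b == r) sqnorm (final_state A x b).

(* Result bit r encodes the value (-1)^r in {-1,1}. *)
Definition sign_of_bit (r : bool) : R := if r then -1 else 1.

Definition computes_with_error {N T} (A : algorithm N T)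
  (f : input N -> R) (eps : R) : Prop :=
  forall x : input N,
    \sum_(r : bool | sign_of_bit r == f x) prob_result A x r >= 1 - eps.

Definition dotp {N} (s x : input N) : nat := \sum_(i < N) (s i && x i).
Definition fourier {N} (f : input N -> R) (s : input N) : R :=
  (2 ^+ N)^-1 * \sum_(x : input N) f x * (-1) ^+ dotp s x.
Definition weight {N} (s : input N) : nat := #|[pred i | s i]|.
Definition lambda {N} (s : input N) : R := (weight s)%:R / N%:R.

Definition realroot (k : nat) (x : R) : R :=
  Num.sg x * powR `|x| (k%:R)^-1.

End Quantum.

Arguments computes_with_error {R N T}.
Arguments prob_result {R N T}.
Arguments final_state {R N T}.
Arguments fourier {R N}.
Arguments lambda {R N}.
Arguments realroot {R}.

From Pilot Require Import Defs.
From HB Require Import structures.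
From mathcomp Require Import all_boot all_order all_algebra.
From mathcomp Require Import complex.
From mathcomp Require Import reals exp.
From mathcomp Require Import ring lra.
Import Order.TTheory GRing.Theory Num.Theory.
Local Open Scope ring_scope.

(* Let W be the random walk on {0,1}^N that flips one uniformly chosen bit per
   step.  The characters chi_s diagonalise W, with eigenvalues
   mu_s = 1 - 2|s|/N.  For the final states psi_x of the algorithm, the energy
     E_k = 2^-N sum_(x,y) W^k(x,y) Re<psi_x, psi_y>
         = sum_b sum_s |psi_b^(s)|^2 mu_s^k
   is bounded in two ways.  After T queries every amplitude psi_b has Fourier
   degree at most T, so mu_s >= 1 - 2T/N on its support and, k being odd,
   E_k >= (1 - 2T/N)^k E_0 = (1 - 2T/N)^k.  Conversely, correctness forces
   Re<psi_x, psi_y> <= 2 sqrt eps whenever f x <> f y, that is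
   Re<psi_x, psi_y> <= (1 + 2 sqrt eps)/2 + (1 - 2 sqrt eps)/2 f(x) f(y), and
   summing this against W^k bounds E_k by the quantity under the k-th root. *)

Lemma sum_delta (T : finType) (R : pzSemiRingType) (x : T) (h : T -> R) :
  \sum_y (x == y)%:R * h y = h x.
Proof.
rewrite (bigD1 x) //= eqxx mul1r big1 ?addr0 // => y neq_yx.
by rewrite eq_sym (negbTE neq_yx) mul0r.
Qed.

Section Fourier.
Variables (F : numFieldType) (N : nat).

Definition chi (s x : input N) : F := (-1) ^+ dotp s x.
Definition addi (s t : input N) : input N := [ffun j => s j (+) t j].
Definition zeroi : input N := [ffun => false].
Definition ei (i : 'I_N) : input N := [ffun j => j == i].

(* [fhat R N f] is [fourier f]; [fhat] also transforms complex amplitudes. *)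
Definition fhat (g : input N -> F) (s : input N) : F :=
  (2 ^+ N)^-1 * \sum_x g x * chi s x.

Fixpoint walk (k : nat) (x y : input N) : F :=
  if k is k'.+1 then N%:R^-1 * \sum_(i < N) walk k' (addi x (ei i)) y
  else (x == y)%:R.

Definition walk_eigenvalue (s : input N) : F := N%:R^-1 * \sum_(i < N) (-1) ^+ s i.

Lemma chi_prod s x : chi s x = \prod_(i < N) (-1) ^+ (s i && x i).
Proof. exact: (big_morph _ (exprD (-1 : F)) (expr0 _)). Qed.

Lemma chiC s x : chi s x = chi x s.
Proof. by rewrite !chi_prod; apply: eq_bigr => i _; rewrite andbC. Qed.

Lemma chiMl s t x : chi s x * chi t x = chi (addi s t) x.
Proof.
rewrite !chi_prod -big_split /=; apply: eq_bigr => i _.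
by rewrite ffunE; case: (x i); rewrite ?andbT ?andbF ?signr_addb ?expr0 ?mulr1.
Qed.

Lemma chiMr s x y : chi s x * chi s y = chi s (addi x y).
Proof. by rewrite !(chiC s) chiMl. Qed.

Lemma chi_ei s i : chi s (ei i) = (-1) ^+ s i.
Proof.
rewrite chi_prod (bigD1 i) //= big1 ?mulr1; first by rewrite ffunE eqxx andbT.
by move=> j /negbTE neq_ji; rewrite ffunE neq_ji andbF.
Qed.

Lemma chi_zeroi x : chi zeroi x = 1.
Proof. by rewrite chi_prod big1 // => i _; rewrite ffunE. Qed.

Lemma sum_chi s : \sum_x chi s x = if s == zeroi then 2 ^+ N else 0.
Proof.
under eq_bigr do rewrite chi_prod.
rewrite -(bigA_distr_bigA (fun i (b : bool) => (-1 : F) ^+ (s i && b))) /=.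
under eq_bigr do rewrite big_bool /= andbF andbT expr0.
have [->|nz_s] := eqVneq s zeroi.
  by rewrite (eq_bigr (fun _ => 2)) ?prodr_const ?card_ord // => i _; rewrite ffunE.
have [i si] : exists i, s i.
  apply/existsP; apply: contraR nz_s => /existsPn s0.
  by apply/eqP/ffunP => j; rewrite ffunE; apply/negbTE/s0.
by rewrite (bigD1 i) //= si expr1 addNr mul0r.
Qed.

Lemma addi_eq0 s t : (addi s t == zeroi) = (s == t).
Proof.
apply/eqP/eqP => [st0|->]; last by apply/ffunP => j; rewrite !ffunE addbb.
by apply/ffunP => j; move/ffunP: st0 => /(_ j); rewrite !ffunE; case: (s j); case: (t j).
Qed.

Lemma two_expN_neq0 : (2 : F) ^+ N != 0.
Proof. by rewrite expf_neq0 // pnatr_eq0. Qed.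

Lemma fhat_inversion g x : g x = \sum_s fhat g s * chi s x.
Proof.
rewrite /fhat.
under eq_bigr do rewrite big_distrr big_distrl /=.
rewrite exchange_big /=.
rewrite (eq_bigr (fun y => (2 ^+ N)^-1 * (g y * (if y == x then 2 ^+ N else 0)))); last first.
  move=> y _; rewrite -addi_eq0 -sum_chi !big_distrr /=; apply: eq_bigr => s _.
  by rewrite -!mulrA chiMr chiC.
rewrite (bigD1 x) //= eqxx big1 ?addr0; first by rewrite mulrCA mulVf ?two_expN_neq0 ?mulr1.
by move=> y /negbTE ->; rewrite !mulr0.
Qed.

Lemma walk_chi k x s : \sum_y walk k x y * chi s y = walk_eigenvalue s ^+ k * chi s x.
Proof.
elim: k x => [|k IHk] x /=; first by rewrite sum_delta expr0 mul1r.
under eq_bigr do rewrite -mulrA big_distrl /=.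
rewrite -big_distrr /= exchange_big /=.
under eq_bigr do rewrite IHk -chiMr chi_ei.
rewrite /walk_eigenvalue exprS -!mulrA; congr (_ * _).
rewrite big_distrr big_distrl /=; apply: eq_bigr => i _.
by rewrite mulrA mulrC.
Qed.

Lemma walk_form_fourier k g h :
  (2 ^+ N)^-1 * \sum_x g x * \sum_y walk k x y * h y
  = \sum_s fhat g s * fhat h s * walk_eigenvalue s ^+ k.
Proof.
have walk_h x : \sum_y walk k x y * h y
    = \sum_s fhat h s * walk_eigenvalue s ^+ k * chi s x.
  under eq_bigr do rewrite (fhat_inversion h) big_distrr /=.
  rewrite exchange_big /=; apply: eq_bigr => s _.
  under eq_bigr do rewrite mulrCA.
  by rewrite -big_distrr /= walk_chi mulrA.
under eq_bigr do rewrite walk_h big_distrr /=.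
rewrite exchange_big big_distrr /=; apply: eq_bigr => s _.
rewrite /fhat -!mulrA big_distrl /=; congr (_ * _).
rewrite big_distrl /=; apply: eq_bigr => x _.
by rewrite [RHS]mulrAC -[RHS]mulrA.
Qed.

Lemma weight_zeroi : weight zeroi = 0%N.
Proof. by apply: eq_card0 => i; rewrite !inE /= ffunE. Qed.

Lemma walk_eigenvalueE s : (0 < N)%N ->
  walk_eigenvalue s = 1 - 2 * (weight s)%:R / N%:R.
Proof.
move=> N_gt0; rewrite /walk_eigenvalue.
under eq_bigr do rewrite signrE -muln2 natrM.
rewrite sumrB sumr_const card_ord -mulr_suml -natr_sum.
rewrite -(big_mkcond (fun i => s i) (fun _ => 1%N)) sum1_card.
by rewrite mulrBr mulVf ?pnatr_eq0 -?lt0n // mulrC [_ * 2]mulrC.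
Qed.

Lemma walk_sum1 k x : (0 < N)%N -> \sum_y walk k x y = 1.
Proof.
move=> N_gt0; have := walk_chi k x zeroi.
rewrite chi_zeroi mulr1 walk_eigenvalueE // weight_zeroi mulr0 mul0r subr0 expr1n.
by under eq_bigr do rewrite chi_zeroi mulr1.
Qed.

Lemma walk_ge0 k x y : 0 <= walk k x y.
Proof.
elim: k x => [|k IHk] x /=; first by rewrite ler0n.
by rewrite mulr_ge0 ?invr_ge0 ?ler0n // sumr_ge0.
Qed.

Lemma walk_form_affine k a c g h : (0 < N)%N ->
  (2 ^+ N)^-1 * \sum_x \sum_y walk k x y * (a + c * (g x * h y))
  = a + c * ((2 ^+ N)^-1 * \sum_x g x * \sum_y walk k x y * h y).
Proof.
move=> N_gt0.
have row x : \sum_y walk k x y * (a + c * (g x * h y))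
    = a + c * (g x * \sum_y walk k x y * h y).
  rewrite (eq_bigr (fun y => a * walk k x y + c * (g x * (walk k x y * h y)))).
    by rewrite big_split /= -!mulr_sumr walk_sum1 // mulr1.
  by move=> y _; ring.
under eq_bigr do rewrite row.
rewrite big_split /= sumr_const -mulr_sumr card_ffun card_bool card_ord.
by rewrite -[a *+ _]mulr_natr natrX; field; rewrite two_expN_neq0.
Qed.

Lemma fhat_sum (I : finType) (G : I -> input N -> F) s :
  fhat (fun x => \sum_j G j x) s = \sum_j fhat (G j) s.
Proof.
rewrite /fhat -big_distrr /=; congr (_ * _).
by under eq_bigr do rewrite big_distrl /=; rewrite exchange_big.
Qed.

Lemma fhat_scale a g s : fhat (fun x => a * g x) s = a * fhat g s.
Proof.
rewrite /fhat mulrCA; congr (_ * _); rewrite big_distrr /=.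
by apply: eq_bigr => x _; rewrite mulrA.
Qed.

Lemma fhat_add g h s : fhat (fun x => g x + h x) s = fhat g s + fhat h s.
Proof.
rewrite /fhat -mulrDr -big_split /=; congr (_ * _).
by apply: eq_bigr => x _; rewrite mulrDl.
Qed.

Lemma fhat_mulchi g e s : fhat (fun x => g x * chi e x) s = fhat g (addi e s).
Proof.
rewrite /fhat; congr (_ * _).
by apply: eq_bigr => x _; rewrite -mulrA chiMl.
Qed.

Definition deg_le (d : nat) (g : input N -> F) :=
  forall s, (d < weight s)%N -> fhat g s = 0.

Lemma deg_le_ext d g h : g =1 h -> deg_le d g -> deg_le d h.
Proof.
move=> eq_gh deg_g s ds; rewrite -(deg_g s ds) /fhat; congr (_ * _).
by apply: eq_bigr => x _; rewrite eq_gh.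
Qed.

Lemma deg_le_mono d d' g : (d <= d')%N -> deg_le d g -> deg_le d' g.
Proof. by move=> le_dd' deg_g s ds; apply: deg_g; apply: leq_ltn_trans ds. Qed.

Lemma deg_le_const d a : deg_le d (fun _ => a).
Proof.
move=> s ds; rewrite /fhat -big_distrr sum_chi /=.
by case: eqP ds => [->|_]; rewrite ?weight_zeroi ?mulr0.
Qed.

Lemma deg_le_sum d (I : finType) (G : I -> input N -> F) :
  (forall j, deg_le d (G j)) -> deg_le d (fun x => \sum_j G j x).
Proof. by move=> deg_G s ds; rewrite fhat_sum big1 // => j _; apply: deg_G. Qed.

Lemma deg_le_scale d a g : deg_le d g -> deg_le d (fun x => a * g x).
Proof. by move=> deg_g s ds; rewrite fhat_scale deg_g ?mulr0. Qed.

Lemma deg_le_add d g h : deg_le d g -> deg_le d h -> deg_le d (fun x => g x + h x).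
Proof. by move=> deg_g deg_h s ds; rewrite fhat_add deg_g ?deg_h ?addr0. Qed.

Lemma weight_addi_ei i s : (weight s <= (weight (addi (ei i) s)).+1)%N.
Proof.
have sub : [pred j | s j] \subset [predU1 i & [pred j | addi (ei i) s j]].
  by apply/subsetP => j; rewrite !inE /= !ffunE; case: eqP => //= _ ->.
apply: leq_trans (subset_leq_card sub) _.
by rewrite cardU1 /weight; case: (_ \in _).
Qed.

Lemma deg_le_mulchi d g i : deg_le d g -> deg_le d.+1 (fun x => g x * chi (ei i) x).
Proof.
move=> deg_g s ds; rewrite fhat_mulchi; apply: deg_g.
by rewrite -ltnS; apply: leq_trans ds (weight_addi_ei i s).
Qed.

(* Branching on one input bit raises the Fourier degree by at most one:
   [if x i then h x else g x = (g x + h x)/2 + (g x - h x)/2 * (-1)^(x i)]. *)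
Lemma deg_le_if d i g h :
  deg_le d g -> deg_le d h -> deg_le d.+1 (fun x => if x i then h x else g x).
Proof.
move=> deg_g deg_h.
pose avg x := 2^-1 * g x + 2^-1 * h x.
pose dif x := 2^-1 * g x + (- 2^-1) * h x.
apply: (@deg_le_ext _ (fun x => avg x + dif x * chi (ei i) x)).
  move=> x; rewrite chiC chi_ei /avg /dif.
  by case: (x i); rewrite ?expr0 ?expr1; field.
apply: deg_le_add.
  by apply: deg_le_mono (leqnSn d) _; apply: deg_le_add; apply: deg_le_scale.
by apply: deg_le_mulchi; apply: deg_le_add; apply: deg_le_scale.
Qed.

End Fourier.

Section FourierMorph.
Variables (F1 F2 : numFieldType) (phi : {rmorphism F1 -> F2}) (N : nat).

Lemma chi_rmorph (s x : input N) : phi (chi F1 N s x) = chi F2 N s x.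
Proof. by rewrite rmorphXn rmorphN1. Qed.

Lemma walk_rmorph k (x y : input N) : phi (walk F1 N k x y) = walk F2 N k x y.
Proof.
elim: k x => [|k IHk] x /=; first by rewrite rmorph_nat.
rewrite rmorphM fmorphV rmorph_nat rmorph_sum; congr (_ * _).
by apply: eq_bigr => i _; rewrite IHk.
Qed.

Lemma walk_eigenvalue_rmorph (s : input N) :
  phi (walk_eigenvalue F1 N s) = walk_eigenvalue F2 N s.
Proof.
rewrite rmorphM fmorphV rmorph_nat rmorph_sum; congr (_ * _).
by apply: eq_bigr => i _; rewrite rmorphXn rmorphN1.
Qed.

Lemma fhat_rmorph (g : input N -> F1) s :
  phi (fhat F1 N g s) = fhat F2 N (fun x => phi (g x)) s.
Proof.
rewrite rmorphM fmorphV rmorphXn rmorph_nat rmorph_sum; congr (_ * _).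
by apply: eq_bigr => x _; rewrite rmorphM chi_rmorph.
Qed.

End FourierMorph.

Section Amplitudes.
Variable R : realType.
Local Notation C := R[i].
Local Notation RC := (real_complex R).
Local Notation sqnorm := (sqnorm R).
Local Notation apply := (apply R).
Local Notation oracle := (oracle R).
Local Notation gates := (gates R _ _).

Definition rdot (u v : C) : R :=
  complex.Re u * complex.Re v + complex.Im u * complex.Im v.

Lemma rdotC u v : rdot u v = rdot v u.
Proof. by rewrite /rdot mulrC [complex.Im u * _]mulrC. Qed.

Lemma rdotzz z : rdot z z = sqnorm z.
Proof. by rewrite /rdot /Defs.sqnorm !expr2. Qed.

Lemma Re_conjM u v : complex.Re (u^* * v) = rdot u v.
Proof. by case: u => a b; case: v => c d; rewrite /rdot /=; ring. Qed.

Lemma Re_sum (I : finType) (G : I -> C) :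
  complex.Re (\sum_i G i) = \sum_i complex.Re (G i).
Proof. exact: (raddf_sum (@complex.Re R : Rcomplex R -> R)). Qed.

Lemma Re_realMl r z : complex.Re (RC r * z) = r * complex.Re z.
Proof. by case: z => a b /=; ring. Qed.

Lemma sqnorm_conjM z : RC (sqnorm z) = z^* * z.
Proof.
case: z => a b; rewrite /Defs.sqnorm /=.
by apply/eqP; rewrite eq_complex /=; apply/andP; split; apply/eqP; ring.
Qed.

Lemma sqnorm_ge0 z : 0 <= sqnorm z.
Proof. by rewrite addr_ge0 ?sqr_ge0. Qed.

(* The weight [a] is left free, to be optimised in [le_two_sqrtr]. *)
Lemma rdot_le_AMGM a u v : 0 < a -> 2 * rdot u v <= a * sqnorm u + a^-1 * sqnorm v.
Proof.
move=> a_gt0; case: u => p1 p2; case: v => q1 q2; rewrite /rdot /Defs.sqnorm /= -subr_ge0.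
have -> : a * (p1 ^+ 2 + p2 ^+ 2) + a^-1 * (q1 ^+ 2 + q2 ^+ 2) - 2 * (p1 * q1 + p2 * q2)
    = a^-1 * ((a * p1 - q1) ^+ 2 + (a * p2 - q2) ^+ 2).
  by field; rewrite gt_eqF.
by rewrite mulr_ge0 ?invr_ge0 ?addr_ge0 ?sqr_ge0 ?ltW.
Qed.

Definition norm2 {B : finType} (phi : B -> C) := \sum_b (phi b)^* * phi b.

Lemma norm2_unitary {B : finType} (U : op R B) phi :
  unitary R U -> norm2 (apply U phi) = norm2 phi.
Proof.
move=> U_unitary; rewrite /norm2 /Defs.apply.
transitivity (\sum_i \sum_j \sum_k ((U i j)^* * U i k) * ((phi j)^* * phi k)).
  apply: eq_bigr => i _; rewrite rmorph_sum big_distrl /=; apply: eq_bigr => j _.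
  by rewrite big_distrr /=; apply: eq_bigr => k _; rewrite rmorphM; ring.
rewrite exchange_big /=; apply: eq_bigr => j _; rewrite exchange_big /=.
by under eq_bigr do rewrite -big_distrl /= U_unitary; rewrite sum_delta.
Qed.

Lemma oracle_mapK {N m} (x : input N) : involutive (@oracle_map N m x).
Proof.
by case=> [[[i a] w] r]; rewrite /oracle_map /bidx /bans /bwork /=; case: a; case: (x i).
Qed.

Lemma apply_oracle {N m} (x : input N) (phi : basis N m -> C) b :
  apply (oracle x) phi b = phi (oracle_map x b).
Proof.
rewrite /Defs.apply /Defs.oracle -[RHS]sum_delta; apply: eq_bigr => j _.
by rewrite (canF_eq (oracle_mapK x)) eq_sym.
Qed.

Lemma norm2_oracle {N m} (x : input N) (phi : basis N m -> C) :
  norm2 (apply (oracle x) phi) = norm2 phi.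
Proof.
rewrite /norm2; under eq_bigr do rewrite apply_oracle.
by rewrite [RHS](reindex_inj (can_inj (oracle_mapK x))).
Qed.

Lemma norm2_ket {B : finType} (b0 : B) : norm2 (ket R b0) = 1.
Proof.
rewrite /norm2 (bigD1 b0) //= /ket eqxx rmorph1 mulr1 big1 ?addr0 // => b /negbTE ->.
by rewrite mulr0.
Qed.

Lemma norm2_state {N T} (A : algorithm R N T) x t : norm2 (state_upto R A x t) = 1.
Proof.
elim: t => [|t IHt] /=; rewrite norm2_unitary ?norm2_ket ?norm2_oracle //.
all: exact: gates_unitary.
Qed.

Lemma state_deg_le {N T} (A : algorithm R N T) t b :
  deg_le C N t (fun x => state_upto R A x t b).
Proof.
elim: t b => [|t IHt] b /=; first exact: deg_le_const.
pose U := gates A (inord t.+1).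
apply: (@deg_le_ext _ _ _ (fun x => \sum_j U b j * state_upto R A x t (oracle_map x j))).
  by move=> x; apply: eq_bigr => j _; rewrite apply_oracle.
apply: deg_le_sum => -[[[i a] w] r]; apply: deg_le_scale.
apply: (@deg_le_ext _ _ _ (fun x =>
    if x i then state_upto R A x t (i, ~~ a, w, r) else state_upto R A x t (i, a, w, r))).
  by move=> x; rewrite /oracle_map /bidx /bans /bwork /=; case: (x i); case: a.
exact: deg_le_if.
Qed.

Lemma Re_walk_form N k (g h : input N -> C) :
  complex.Re ((2 ^+ N)^-1 * \sum_x (g x)^* * \sum_y walk C N k x y * h y)
  = (2 ^+ N)^-1 * \sum_x \sum_y walk R N k x y * rdot (g x) (h y).
Proof.
have -> : (2 ^+ N)^-1 = RC ((2 ^+ N)^-1) by rewrite fmorphV rmorphXn rmorph_nat.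
rewrite Re_realMl Re_sum; congr (_ * _); apply: eq_bigr => x _.
rewrite big_distrr /= Re_sum; apply: eq_bigr => y _.
by rewrite -(walk_rmorph _ _ (real_complex R)) mulrCA Re_realMl Re_conjM.
Qed.

End Amplitudes.

Section OddPowers.
Variable R : realDomainType.

Lemma odd_ltrXn k (a b : R) : odd k -> a < b -> a ^+ k < b ^+ k.
Proof.
move=> k_odd lt_ab; have k_neq0 : k != 0%N by case: k k_odd.
have exprN x : (- x) ^+ k = - x ^+ k by rewrite exprNn -signr_odd k_odd mulN1r.
have [a_ge0|a_lt0] := lerP 0 a; first by rewrite (ltrXn2r k a_ge0 lt_ab).
have [b_le0|b_gt0] := lerP b 0.
  by rewrite -ltrN2 -!exprN (ltrXn2r k) ?oppr_ge0 ?ltrN2.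
by apply: (@lt_trans _ _ 0); rewrite ?exprn_odd_lt0 ?exprn_odd_gt0.
Qed.

Lemma odd_lerXn k (a b : R) : odd k -> a <= b -> a ^+ k <= b ^+ k.
Proof.
by move=> k_odd; rewrite le_eqVlt => /predU1P[->//|/(@odd_ltrXn _ _ _ k_odd)/ltW].
Qed.

End OddPowers.

Section RealRoot.
Variable R : realType.

Lemma realrootXn k (V : R) : odd k -> realroot k V ^+ k = V.
Proof.
move=> k_odd; have k_gt0 : (0 < k)%N by case: k k_odd.
rewrite /realroot exprMn.
have -> : (`|V| `^ (k%:R)^-1) ^+ k = `|V|.
  by rewrite -powR_mulrn ?powR_ge0 // -powRrM mulVf ?powRr1 // pnatr_eq0 -lt0n.
have [->|V_neq0] := eqVneq V 0; first by rewrite normr0 mulr0.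
by rewrite sgr_odd // k_odd expr1 -numEsg.
Qed.

Lemma realroot_ge k (m V : R) : odd k -> m ^+ k <= V -> m <= realroot k V.
Proof.
move=> k_odd le_mV; rewrite leNgt; apply/negP => /(@odd_ltrXn _ _ _ _ k_odd).
by rewrite realrootXn // ltNge le_mV.
Qed.

End RealRoot.

Section SqrtBound.
Variable R : rcfType.

(* The infimum of [a + eps / a] over [a > 0] is [2 * sqrt eps]. *)
Lemma le_two_sqrtr (eps X : R) : 0 <= eps ->
  (forall a, 0 < a -> X <= a + eps / a) -> X <= 2 * Num.sqrt eps.
Proof.
move=> eps_ge0 X_le; have [eps0|eps_neq0] := eqVneq eps 0.
  rewrite eps0 sqrtr0 mulr0 leNgt; apply/negP => X_gt0.
  have := X_le (X / 2); rewrite eps0 mul0r addr0 divr_gt0 //; lra.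
have sqrt_gt0 : 0 < Num.sqrt eps by rewrite sqrtr_gt0 lt_neqAle eq_sym eps_neq0.
have := X_le _ sqrt_gt0.
rewrite -{2}(sqr_sqrtr eps_ge0) expr2 mulfK ?gt_eqF //; lra.
Qed.

End SqrtBound.

Section Algorithm.
Variables (R : realType) (N T : nat) (A : algorithm R N T).
Local Notation C := R[i].
Local Notation psi x := (final_state A x).
Local Notation p := (prob_result A).
Local Notation sqnorm := (sqnorm R).
Local Notation rdot := (rdot R).

Definition amp_hat b s := fhat C N (fun x => psi x b) s.
Definition overlap x y := \sum_b rdot (psi x b) (psi y b).
Definition energy k := \sum_b \sum_s sqnorm (amp_hat b s) * walk_eigenvalue R N s ^+ k.

Lemma energy_walk k :
  energy k = (2 ^+ N)^-1 * \sum_x \sum_y walk R N k x y * overlap x y.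
Proof.
have energy_b b : \sum_s sqnorm (amp_hat b s) * walk_eigenvalue R N s ^+ k
    = (2 ^+ N)^-1 * \sum_x \sum_y walk R N k x y * rdot (psi x b) (psi y b).
  rewrite -Re_walk_form walk_form_fourier Re_sum; apply: eq_bigr => s _.
  rewrite -(fhat_rmorph _ _ (Num.conj : {rmorphism C -> C})) -/(amp_hat b s).
  rewrite -(walk_eigenvalue_rmorph _ _ (real_complex R)) -rmorphXn -sqnorm_conjM.
  by rewrite -rmorphM.
rewrite /energy (eq_bigr _ (fun b _ => energy_b b)) -mulr_sumr; congr (_ * _).
rewrite exchange_big /=; apply: eq_bigr => x _; rewrite exchange_big /=.
by apply: eq_bigr => y _; rewrite /overlap mulr_sumr.
Qed.

Lemma sum_sqnorm_final x : \sum_b sqnorm (psi x b) = 1.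
Proof.
apply: (@complexI R); rewrite rmorph_sum rmorph1 /=.
under eq_bigr do rewrite sqnorm_conjM.
exact: norm2_state.
Qed.

Lemma overlap_xx x : overlap x x = 1.
Proof. by rewrite -(sum_sqnorm_final x); apply: eq_bigr => b _; apply: rdotzz. Qed.

Lemma energy0 : energy 0 = 1.
Proof.
rewrite energy_walk /=.
under eq_bigr do rewrite sum_delta overlap_xx.
rewrite sumr_const card_ffun card_bool card_ord -mulr_natr mul1r natrX.
by rewrite mulVf ?two_expN_neq0.
Qed.

Lemma energy_ge k : odd k -> (0 < N)%N -> (1 - 2 * T%:R / N%:R) ^+ k <= energy k.
Proof.
move=> k_odd N_gt0.
rewrite -[leLHS]mulr1 -[X in _ * X <= _]energy0 /energy mulr_sumr.
apply: ler_sum => b _.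
rewrite mulr_sumr; apply: ler_sum => s _; rewrite expr0 mulr1 mulrC.
have [le_sT|lt_Ts] := leqP (weight s) T.
  apply: ler_wpM2l; first exact: sqnorm_ge0.
  apply: odd_lerXn => //; rewrite walk_eigenvalueE // lerD2l lerN2.
  by rewrite ler_pM2r ?invr_gt0 ?ltr0n // ler_pM2l // ler_nat.
have -> : amp_hat b s = 0 by apply: state_deg_le.
by rewrite /Defs.sqnorm /= expr0n addr0 !mul0r.
Qed.

Lemma prob_ge0 x r : 0 <= p x r.
Proof. by apply: sumr_ge0 => b _; apply: sqnorm_ge0. Qed.

Lemma prob_split x r : p x r + p x (~~ r) = 1.
Proof.
rewrite /prob_result -(sum_sqnorm_final x) [RHS](bigID (fun b => bres b == r)) /=.
by congr (_ + _); apply: eq_bigl => b; case: (bres b); case: r.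
Qed.

(* Apply AM-GM to the part of the overlap where the result register reads [r]
   and, with the roles of [x] and [y] exchanged, to the part where it reads [~~ r]. *)
Lemma overlap_le_AMGM a x y r : 0 < a ->
  2 * overlap x y <= a * (p x r + p y (~~ r)) + a^-1 * (p y r + p x (~~ r)).
Proof.
move=> a_gt0; rewrite /overlap (bigID (fun b => bres b == r)) /= mulrDr.
have sum_AMGM (P : pred (basis N (wsize R N T A))) u v :
    2 * \sum_(b | P b) rdot (u b) (v b)
    <= a * \sum_(b | P b) sqnorm (u b) + a^-1 * \sum_(b | P b) sqnorm (v b).
  rewrite !mulr_sumr -big_split /=; apply: ler_sum => b _; exact: rdot_le_AMGM.
have neq_r (F : basis N (wsize R N T A) -> R) :
    \sum_(b | bres b != r) F b = \sum_(b | bres b == ~~ r) F b.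
  by apply: eq_bigl => b; case: (bres b); case: r.
have := sum_AMGM (fun b => bres b == r) (psi x) (psi y).
have := sum_AMGM (fun b => bres b == ~~ r) (psi y) (psi x).
rewrite (eq_bigr _ (fun b _ => rdotC R (psi y b) (psi x b))) neq_r /prob_result; lra.
Qed.

Lemma overlap_le1 x y : overlap x y <= 1.
Proof.
have := overlap_le_AMGM 1 x y true ltr01; rewrite invr1.
have := prob_split x true; have := prob_split y true; rewrite /=; lra.
Qed.

Variable eps : R.

Lemma overlap_le_opposite x y r :
  1 - eps <= p x r -> 1 - eps <= p y (~~ r) -> overlap x y <= 2 * Num.sqrt eps.
Proof.
move=> px py.
have split_x := prob_split x r; have split_y := prob_split y r.
have x_ge0 := prob_ge0 x (~~ r); have y_ge0 := prob_ge0 y r.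
apply: le_two_sqrtr => [|a a_gt0]; first by lra.
have := overlap_le_AMGM a x y r a_gt0.
have : a * (p x r + p y (~~ r)) <= a * 2 by apply: ler_wpM2l; [exact: ltW | lra].
have : a^-1 * (p y r + p x (~~ r)) <= a^-1 * (2 * eps).
  by apply: ler_wpM2l; [rewrite invr_ge0 ltW | lra].
lra.
Qed.

Variable f : input N -> R.
Hypothesis f_sign : forall x, f x = 1 \/ f x = -1.
Hypothesis A_computes_f : computes_with_error A f eps.

Let oner_eqN1 : ((1 : R) == -1) = false.
Proof. by apply/negbTE/eqP; lra. Qed.

Lemma prob_correct x : 1 - eps <= p x (f x == -1).
Proof.
have N1r_eq1 : ((-1 : R) == 1) = false by rewrite eq_sym oner_eqN1.
have := A_computes_f x; rewrite big_mkcond big_bool /=.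
by case: (f_sign x) => ->; rewrite ?oner_eqN1 ?N1r_eq1 eqxx ?add0r ?addr0.
Qed.

Lemma overlap_le x y : overlap x y
  <= (1 + 2 * Num.sqrt eps) / 2 + (1 - 2 * Num.sqrt eps) / 2 * (f x * f y).
Proof.
have := prob_correct x; have := prob_correct y; have := overlap_le1 x y.
case: (f_sign x) => ->; case: (f_sign y) => ->; rewrite ?eqxx ?oner_eqN1 => le1 py px.
- lra.
- by have := overlap_le_opposite _ _ _ px py; lra.
- by have := overlap_le_opposite _ _ _ px py; lra.
- lra.
Qed.

Lemma energy_le k : (0 < N)%N ->
  energy k <= (1 + 2 * Num.sqrt eps) / 2 + (1 - 2 * Num.sqrt eps) / 2
                 * \sum_s fhat R N f s * fhat R N f s * walk_eigenvalue R N s ^+ k.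
Proof.
move=> N_gt0; rewrite energy_walk -walk_form_fourier -walk_form_affine //.
apply: ler_wpM2l; first by rewrite invr_ge0 exprn_ge0.
apply: ler_sum => x _; apply: ler_sum => y _.
by apply: ler_wpM2l; [apply: walk_ge0 | apply: overlap_le].
Qed.

End Algorithm.

Theorem theorem4 (R : realType) (N : nat) (f : input N -> R) (eps : R) (T : nat)
  (hN : (1 <= N)%N)
  (hf : forall x, f x = 1 \/ f x = -1)
  (A : algorithm R N T)
  (hA : computes_with_error A f eps) :
  forall k : nat, (0 < k)%N -> odd k ->
  (T%:R : R) >= 2^-1 * (1 - realroot k
      ((1 + 2 * Num.sqrt eps) / 2
       + (1 - 2 * Num.sqrt eps) / 2
         * \sum_(s : input N) fourier f s ^+ 2 * (1 - 2 * lambda s) ^+ k))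
    * N%:R.
Proof.
move=> k _ k_odd.
set S := \sum_(s : input N) _; set r := realroot k _.
have S_walk : S = \sum_s fhat R N f s * fhat R N f s * walk_eigenvalue R N s ^+ k.
  by apply: eq_bigr => s _; rewrite walk_eigenvalueE // expr2 /lambda [2 * (_ / _)]mulrA.
have root_ge : 1 - 2 * T%:R / N%:R <= r.
  apply: realroot_ge => //; rewrite S_walk.
  exact: le_trans (energy_ge _ _ _ A _ k_odd hN) (energy_le _ _ _ A _ _ hf hA _ hN).
have -> : (T%:R : R) = 2^-1 * (2 * T%:R / N%:R) * N%:R.
  by field; rewrite pnatr_eq0 -lt0n.
by rewrite ler_wpM2r ?ler0n // ler_wpM2l ?invr_ge0 ?ler0n //; lra.
Qed.
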